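(* Let $\mathcal{D}$ be a hybrid basic action theory and let $\varphi$ be an effect which is a constraint on the values of a primitive temporal fluent $f$ with contexts $\gamma^f_i$. Then for every situation $\sigma$: $$\mathcal{D}\models\Big(\mathit{ProperHTSCAchvCausalSetting}(\varphi,\sigma)\land\exists s_\varphi.\big[\mathit{AchvSit}(s_\varphi,\varphi,\sigma)\land\exists i.\big(\gamma^f_i[s_\varphi]\land\forall s'.(S_0\le s'\le s_\varphi\supset\gamma^f_i[s'])\big)\big]\Big)\supset\neg\exists a,ts.\,\mathit{CausesDir}^{\mathit{prim}}_{\mathit{temp}}(a,ts,\varphi,\sigma),$$ where $\mathit{ProperHTSCAchvCausalSetting}(\varphi,\sigma)\doteq\mathit{Exec}(\sigma)\land\exists a_0.\,\big(do(a_0,S_0)\le\sigma\land\neg\varphi[\mathit{start}(S_0),S_0]\land\neg\varphi[\mathit{time}(a_0),S_0]\big)\land\varphi[\mathit{start}(\sigma),\sigma]$.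
   Context: Hybrid temporal situation calculus (HTSC): $S_0$ initial situation, $do(a,s)$ successor situation. $s\sqsubset s'$: $s'$ reachable from $s$ by one or more actions; $s\sqsubseteq s'$: $s\sqsubset s'\lor s=s'$. $\mathit{time}(a(\vec x,t))=t$, $\mathit{start}(do(a,s))=\mathit{time}(a)$. $\mathit{Exec}(s)\doteq\forall a,s'.(do(a,s')\sqsubseteq s\supset\mathit{Poss}(a,s')\land\mathit{start}(s')\le\mathit{time}(a))$; $s<s'$ abbreviates $s\sqsubset s'\land\mathit{Exec}(s')$; $s\le s'$ abbreviates $s<s'\lor s=s'$. $\mathit{timeStamp}(S_0)=0$, $\mathit{timeStamp}(do(a,s))=\mathit{timeStamp}(s)+1$. A hybrid basic action theory $\mathcal{D}$ contains initial-state, precondition, successor-state (discrete fluents), state evolution (temporal fluents), unique-names and foundational axioms. A temporal fluent $f$ has state evolution axiom $f(\vec x,t,s)=y\equiv[\bigvee_i(\gamma^f_i(\vec x,s)\land\delta_i(\vec x,y,t,s))\lor(y=f(\vec x,\mathit{start}(s),s)\land\neg\bigvee_i\gamma^f_i(\vec x,s))]$, the contexts $\gamma^f_i$ being mutually exclusive formulas over discrete fluents. An effect $\varphi$ is a situation- and time-suppressed formula, uniform in the situation, constraining the value of $f$; $\varphi[t,s]$ restores time $t$ and situation $s$; $\psi[s]$ restores $s$ in a situation-suppressed $\psi$. $\mathit{CausesDir}(a,ts,\psi,s)\doteq\exists s_a.\,\mathit{timeStamp}(s_a)=ts\land(S_0<do(a,s_a)\le s)\land\neg\psi[s_a]\land\forall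 s'.(do(a,s_a)\le s'\le s\supset\psi[s'])$. $\mathit{end}(s',s)=\mathit{start}(s')$ if $s'=s$; $=\mathit{time}(a)$ if $do(a,s')\le s$. $\mathit{AchvSitAux}(s_\varphi,\varphi,s)\doteq\varphi[\mathit{end}(s_\varphi,s),s_\varphi]\land\forall s',t.(s_\varphi<s'\le s\land\mathit{start}(s')\le t\le\mathit{end}(s',s)\supset\varphi[t,s'])$; $\mathit{AchvSit}(s_\varphi,\varphi,s)\doteq\mathit{AchvSitAux}(s_\varphi,\varphi,s)\land\neg\exists s''.(s''<s_\varphi\land\mathit{AchvSitAux}(s'',\varphi,s))$. $\mathit{CausesDir}^{\mathit{prim}}_{\mathit{temp}}(a,ts,\varphi,s)\doteq\exists s_\varphi.\,\mathit{AchvSit}(s_\varphi,\varphi,s)\land\exists i.\,\mathit{CausesDir}(a,ts,\gamma^f_i,s_\varphi)$. *)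

(* Situations are finite action histories (the standard model of the
   foundational axioms): S0 = nil, do a s = a :: s (most recent action first). *)
From Stdlib Require Import Reals List.
Open Scope R_scope.

Section HTSC.
Variable A : Type.
Variable time : A -> R.          (* time(a(x,t)) = t *)
Variable Poss : A -> list A -> Prop.
Variable start0 : R.

Definition S0 : list A := nil.
Definition do_ (a : A) (s : list A) : list A := a :: s.

Definition sqsub (s s' : list A) : Prop := exists l, l <> nil /\ s' = l ++ s.
Definition sqsubeq (s s' : list A) : Prop := sqsub s s' \/ s = s'.

Definition start (s : list A) : R :=
  match s with nil => start0 | a :: _ => time a end.

Definition timeStamp (s : list A) : nat := length s.

Definition Exec (s : list A) : Prop :=
  forall a s', sqsubeq (do_ a s') s -> Poss a s' /\ start s' <= time a.

Definition slt (s s' : list A) : Prop := sqsub s s' /\ Exec s'.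
Definition sle (s s' : list A) : Prop := slt s s' \/ s = s'.

(* end(s',s) as a (functional, partial) relation: endR s' s t <-> end(s',s) = t *)
Definition endR (s' s : list A) (t : R) : Prop :=
  (s' = s /\ t = start s') \/ (exists a, sle (do_ a s') s /\ t = time a).

(* psi : situation-restored formula psi[s] *)
Definition CausesDir (a : A) (ts : nat) (psi : list A -> Prop) (s : list A) : Prop :=
  exists sa, timeStamp sa = ts /\ slt S0 (do_ a sa) /\ sle (do_ a sa) s /\
    ~ psi sa /\ (forall s', sle (do_ a sa) s' -> sle s' s -> psi s').

(* phi : time- and situation-restored effect phi[t,s] *)
Definition AchvSitAux (sphi : list A) (phi : R -> list A -> Prop) (s : list A) : Prop :=
  (exists e, endR sphi s e /\ phi e sphi) /\
  (forall s' t, slt sphi s' -> sle s' s ->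
     forall e, endR s' s e -> start s' <= t -> t <= e -> phi t s').

Definition AchvSit (sphi : list A) (phi : R -> list A -> Prop) (s : list A) : Prop :=
  AchvSitAux sphi phi s /\ ~ (exists s'', slt s'' sphi /\ AchvSitAux s'' phi s).

Definition CausesDirPrimTemp {I : Type} (gamma : I -> list A -> Prop)
  (a : A) (ts : nat) (phi : R -> list A -> Prop) (s : list A) : Prop :=
  exists sphi, AchvSit sphi phi s /\ exists i, CausesDir a ts (gamma i) sphi.

Definition ProperHTSCAchvCausalSetting (phi : R -> list A -> Prop) (sigma : list A) : Prop :=
  Exec sigma /\
  (exists a0, sle (do_ a0 S0) sigma /\ ~ phi (start S0) S0 /\ ~ phi (time a0) S0) /\
  phi (start sigma) sigma.

End HTSC.

Arguments S0 {A}.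

(* The achieving situation of [phi] in an executable [sigma] is unique, since
   achieving situations are prefixes of [sigma] and a proper prefix that also
   achieves [phi] would contradict minimality.  A direct cause would therefore
   flip some context [gamma j] of [f] from false to true on the way to that
   very situation; by mutual exclusivity [j] is the context [i] that already
   holds at every executable situation up to it, which leaves no room for the
   required state where it is false. *)
From Stdlib Require Import Reals List.
Open Scope R_scope.

Section Situations.
Variable A : Type.
Variable time : A -> R.
Variable Poss : A -> list A -> Prop.
Variable start0 : R.

Local Notation do_ := (do_ A).
Local Notation sqsub := (sqsub A).
Local Notation sqsubeq := (sqsubeq A).
Local Notation Exec := (Exec A time Poss start0).
Local Notation slt := (slt A time Poss start0).
Local Notation sle := (sle A time Poss start0).
Local Notation AchvSitAux := (AchvSitAux A time Poss start0).
Local Notation AchvSit := (AchvSit A time Poss start0).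
Local Notation CausesDir := (CausesDir A time Poss start0).

Lemma sqsubeq_iff_app (s s' : list A) : sqsubeq s s' <-> exists l, s' = l ++ s.
Proof.
  unfold sqsubeq, sqsub; split.
  - intros [[l [_ Hl]] | <-]; [eauto | now exists nil].
  - intros [[|x l] ->]; [now right | left].
    exists (x :: l); split; [discriminate | reflexivity].
Qed.

Lemma sqsubeq_trans (s1 s2 s3 : list A) :
  sqsubeq s1 s2 -> sqsubeq s2 s3 -> sqsubeq s1 s3.
Proof.
  rewrite !sqsubeq_iff_app; intros [l1 ->] [l2 ->].
  exists (l2 ++ l1); now rewrite app_assoc.
Qed.

Lemma sqsubeq_do (a : A) (s : list A) : sqsubeq s (do_ a s).
Proof. apply sqsubeq_iff_app; now exists (a :: nil). Qed.

Lemma sqsub_do_sqsubeq (a : A) (s s' : list A) :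
  sqsubeq (do_ a s) s' -> sqsub s s'.
Proof.
  rewrite sqsubeq_iff_app; intros [l ->].
  exists (l ++ a :: nil); split.
  - now destruct l.
  - now rewrite <- app_assoc.
Qed.

Lemma sle_sqsubeq (s s' : list A) : sle s s' -> sqsubeq s s'.
Proof. intros [[Hs _] | <-]; [now left | now right]. Qed.

Lemma Exec_sqsubeq (s s' : list A) : sqsubeq s' s -> Exec s -> Exec s'.
Proof. intros Hs HE a s'' H; apply HE; eapply sqsubeq_trans; eauto. Qed.

Lemma Exec_sle (s s' : list A) : sle s s' -> Exec s -> Exec s'.
Proof. now intros [[_ HE] | <-]. Qed.

Lemma slt_cons_app (x : A) (l s : list A) : Exec (x :: l ++ s) -> slt s (x :: l ++ s).
Proof. intros HE; split; [exists (x :: l); split; [discriminate | reflexivity] | exact HE]. Qed.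

Lemma sle_S0 (s : list A) : Exec s -> sle S0 s.
Proof.
  destruct s as [|x l]; intros HE; [now right | left].
  rewrite <- (app_nil_r l) in HE |- *; now apply slt_cons_app.
Qed.

Lemma AchvSitAux_sqsubeq (phi : R -> list A -> Prop) (sphi s : list A) :
  AchvSitAux sphi phi s -> sqsubeq sphi s.
Proof.
  intros [[e [[[-> _] | [a [Hle _]]] _]] _]; [now right |].
  eapply sqsubeq_trans; [apply sqsubeq_do | exact (sle_sqsubeq _ _ Hle)].
Qed.

Lemma AchvSit_unique (phi : R -> list A -> Prop) (s1 s2 s : list A) :
  Exec s -> AchvSit s1 phi s -> AchvSit s2 phi s -> s1 = s2.
Proof.
  intros HE [H1 Hmin1] [H2 Hmin2].
  assert (HE1 : Exec s1) by (eapply Exec_sqsubeq; [eapply AchvSitAux_sqsubeq|]; eauto).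
  assert (HE2 : Exec s2) by (eapply Exec_sqsubeq; [eapply AchvSitAux_sqsubeq|]; eauto).
  destruct (proj1 (sqsubeq_iff_app _ _) (AchvSitAux_sqsubeq _ _ _ H1)) as [l1 E1].
  destruct (proj1 (sqsubeq_iff_app _ _) (AchvSitAux_sqsubeq _ _ _ H2)) as [l2 E2].
  rewrite E2 in E1; apply app_eq_app in E1 as [[|x l] [[_ Hs] | [_ Hs]]];
    try (simpl in Hs; congruence); exfalso.
  - apply Hmin1; exists s2; split; [subst s1; now apply slt_cons_app | exact H2].
  - apply Hmin2; exists s1; split; [subst s2; now apply slt_cons_app | exact H1].
Qed.

Lemma CausesDir_holds (a : A) (ts : nat) (psi : list A -> Prop) (s : list A) :
  CausesDir a ts psi s -> psi s.
Proof. intros [sa [_ [_ [Hle [_ Hpsi]]]]]; apply Hpsi; [exact Hle | now right]. Qed.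

(* The situation [sa] before the causing action is itself executable, hence
   lies between [S0] and [s]. *)
Lemma not_CausesDir_invariant (a : A) (ts : nat) (psi : list A -> Prop) (s : list A) :
  (forall s', sle S0 s' -> sle s' s -> psi s') -> ~ CausesDir a ts psi s.
Proof.
  intros Hinv [sa [_ [[_ HEa] [Hle [Hnpsi _]]]]]; apply Hnpsi, Hinv.
  - apply sle_S0; eapply Exec_sqsubeq; [apply sqsubeq_do | exact HEa].
  - left; split.
    + exact (sqsub_do_sqsubeq _ _ _ (sle_sqsubeq _ _ Hle)).
    + exact (Exec_sle _ _ Hle HEa).
Qed.

End Situations.

Theorem theorem5p4
  (A : Type) (time : A -> R) (Poss : A -> list A -> Prop) (start0 : R)
  (X Y : Type) (I : Type)
  (f : X -> R -> list A -> Y)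
  (gamma : I -> X -> list A -> Prop)
  (delta : I -> X -> Y -> R -> list A -> Prop)
  (* contexts are mutually exclusive *)
  (Hexcl : forall i j x s, gamma i x s -> gamma j x s -> i = j)
  (* state evolution axiom of the temporal fluent f *)
  (Hsea : forall x t s y,
      f x t s = y <->
      ((exists i, gamma i x s /\ delta i x y t s) \/
       (y = f x (start A time start0 s) s /\ ~ (exists i, gamma i x s))))
  (* the effect phi constrains the value of f at the arguments xphi *)
  (xphi : X) (P : Y -> Prop)
  (sigma : list A) :
  let phi := fun (t : R) (s : list A) => P (f xphi t s) in
  (ProperHTSCAchvCausalSetting A time Poss start0 phi sigma /\
   exists sphi, AchvSit A time Poss start0 sphi phi sigma /\
     exists i, gamma i xphi sphi /\
       (forall s', sle A time Poss start0 S0 s' -> sle A time Poss start0 s' sphi ->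
                   gamma i xphi s')) ->
  ~ (exists a ts,
       CausesDirPrimTemp A time Poss start0 (fun i s => gamma i xphi s) a ts phi sigma).
Proof.
  intros phi [[HE _] [sphi [Hachv [i [Hi Hinv]]]]] [a [ts [sp [Hachv' [j Hcause]]]]].
  assert (sp = sphi) as -> by (eapply AchvSit_unique; eauto).
  assert (j = i) as -> by (eapply Hexcl; [eapply CausesDir_holds, Hcause | exact Hi]).
  eapply not_CausesDir_invariant; eauto.
Qed.
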